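(* Let $K\colon\mathbb{E}(D)\to\mathbb{E}(D)$ be an affine function and $u\colon D\to[0,\infty)$. If $\mathsf{D}K$ has a $u$-ranking supermartingale, then $\inf_n(\mathsf{D}K)^n(u)=\mathbb{O}$.
   Context: $\mathbb{E}(D)$ is the set of functions $D\to[0,\infty]$ with pointwise order and operations ($\infty+x=\infty$, $0\cdot\infty=0$, $r\cdot\infty=\infty$ for $r>0$); $\mathbb{O}$ is the constant zero function; for $x\ge y$ in $[0,\infty]$, $x-y$ is the least $z$ with $x=y+z$. $K$ is affine if $K(\alpha\eta_1+(1-\alpha)\eta_2)=\alpha K(\eta_1)+(1-\alpha)K(\eta_2)$ for all $\eta_1,\eta_2$ and $\alpha\in[0,1]$. $(\mathsf{D}K)(\eta)=K(\eta)-K(\mathbb{O})$. A $u$-ranking supermartingale with respect to $\mathsf{D}K$ is a function $r\colon D\to[0,\infty)$ with $(\mathsf{D}K)(r)+u\le r$. *)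

(* [0,oo] is modelled inside \bar R (extended reals). *)
From HB Require Import structures.
From mathcomp Require Import all_boot all_order all_algebra.
From mathcomp Require Import all_classical all_reals ereal.
Set Implicit Arguments. Unset Strict Implicit. Unset Printing Implicit Defensive.
Import Order.TTheory GRing.Theory Num.Theory.
Local Open Scope ring_scope.
Local Open Scope ereal_scope.

Section Defs.
Variables (R : realType) (D : Type).

Definition isE (eta : D -> \bar R) : Prop := forall d, 0 <= eta d.

Definition zeroE : D -> \bar R := fun _ => 0.

(* K is affine on E(D) (pointwise operations; mathcomp's 0 * +oo = 0) *)
Definition affineE (K : (D -> \bar R) -> (D -> \bar R)) : Prop :=
  forall (eta1 eta2 : D -> \bar R) (a : R), isE eta1 -> isE eta2 ->
    (0 <= a <= 1)%R ->
    K (fun d => a%:E * eta1 d + (1 - a)%:E * eta2 d)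
    = (fun d => a%:E * K eta1 d + (1 - a)%:E * K eta2 d).

(* x - y on [0,oo] for x >= y: the least z with x = y + z.
   If y = +oo (so x = +oo) this is 0; otherwise it is the usual x - y. *)
Definition esubE (x y : \bar R) : \bar R :=
  if y == +oo then 0 else x - y.

Definition DK (K : (D -> \bar R) -> (D -> \bar R)) (eta : D -> \bar R)
  : D -> \bar R := fun d => esubE (K eta d) (K zeroE d).

Definition ranking_supermartingale (K : (D -> \bar R) -> (D -> \bar R))
  (u r : D -> R) : Prop :=
  (forall d, (0 <= r d)%R) /\
  (forall d, DK K (fun x => (r x)%:E) d + (u d)%:E <= (r d)%:E).

End Defs.

(* DK is affine on E(D) and vanishes at O, hence additive and monotone there
   (positivity of DK uses K(O) <= K(eta), which holds because
   K(eta) = a K(eta/a) + (1 - a) K(O) for every a in (0, 1]).  Applying the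
   iterates (DK)^n to u + DK(r) <= r gives (DK)^n(u) + (DK)^(n+1)(r) <= (DK)^n(r),
   and telescoping yields n * inf_k (DK)^k(u) <= r for every n. *)
From HB Require Import structures.
From mathcomp Require Import all_boot all_order all_algebra.
From mathcomp Require Import all_classical all_reals ereal.
From mathcomp Require Import ring lra.
Import Order.TTheory GRing.Theory Num.Theory.
Local Open Scope ring_scope.
Local Open Scope classical_set_scope.
Local Open Scope ereal_scope.

Lemma isE_zeroE (R : realType) (D : Type) : isE (@zeroE R D).
Proof. by []. Qed.

Lemma isE_EFin {R : realType} {D : Type} {f : D -> R} :
  (forall d, (0 <= f d)%R) -> isE (fun d => (f d)%:E).
Proof. by move=> f0 d; rewrite lee_fin. Qed.

Lemma natmul_le_eq0 (R : realType) (m c : R) :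
  (0 <= m)%R -> (forall n : nat, n%:R * m <= c)%R -> m = 0%R.
Proof.
move=> m0 bnd; apply/eqP; rewrite eq_le m0 andbT leNgt; apply/negP => m_gt0.
have c0 : (0 <= c / m)%R by rewrite divr_ge0 // (le_trans _ (bnd 0%N)) ?mul0r.
have := archi_boundP c0; rewrite ltr_pdivrMr // => c_lt.
by have := bnd (Num.Def.archi_bound (c / m)); rewrite leNgt c_lt.
Qed.

Section AffineVanishingAtZero.
Variables (R : realType) (D : Type) (L : (D -> \bar R) -> (D -> \bar R)).
Hypothesis L_isE : forall eta, isE eta -> isE (L eta).
Hypothesis L_affine : affineE L.
Hypothesis L_zero : L (@zeroE R D) = @zeroE R D.
Implicit Types eta : D -> \bar R.

Let half := ((2 : R)^-1)%:E.

Let half_double (y : \bar R) : half * (2%:E * y) = y.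
Proof. by rewrite muleA -EFinM mulVf ?mul1e. Qed.

Let isE_double {eta} : isE eta -> isE (fun d => 2%:E * eta d).
Proof. by move=> eta0 d; apply: mule_ge0. Qed.

Let L_midpoint {eta1 eta2} : isE eta1 -> isE eta2 ->
  L (fun d => half * eta1 d + half * eta2 d) =
  (fun d => half * L eta1 d + half * L eta2 d).
Proof.
move=> eta1_0 eta2_0.
have half01 : (0 <= (2 : R)^-1 <= 1)%R by apply/andP; split; lra.
have half_compl : (1 - (2 : R)^-1 = 2^-1)%R by field.
by have := @L_affine _ _ _ eta1_0 eta2_0 half01; rewrite half_compl.
Qed.

Lemma affine_zero_double eta : isE eta ->
  L (fun d => 2%:E * eta d) = (fun d => 2%:E * L eta d).
Proof.
move=> eta0; apply/funext => d.
have := congr1 (fun f => f d) (L_midpoint (isE_double eta0) (isE_zeroE R D)).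
have -> : (fun x => half * (2%:E * eta x) + half * @zeroE R D x) = eta.
  by apply/funext => x; rewrite half_double /zeroE mule0 adde0.
by rewrite L_zero /zeroE mule0 adde0 => ->; rewrite muleA -EFinM mulfV ?mul1e.
Qed.

Lemma affine_zero_additive eta1 eta2 : isE eta1 -> isE eta2 ->
  L (fun d => eta1 d + eta2 d) = (fun d => L eta1 d + L eta2 d).
Proof.
move=> eta1_0 eta2_0.
have := L_midpoint (isE_double eta1_0) (isE_double eta2_0).
rewrite !affine_zero_double //.
have -> : (fun d => half * (2%:E * eta1 d) + half * (2%:E * eta2 d)) =
          (fun d => eta1 d + eta2 d) by apply/funext => d; rewrite !half_double.
by move->; apply/funext => d; rewrite !half_double.
Qed.

Lemma affine_zero_monotone eta1 eta2 d : isE eta1 -> isE eta2 ->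
  (forall x, eta1 x <= eta2 x) -> L eta1 d <= L eta2 d.
Proof.
move=> eta1_0 eta2_0 le12.
pose gap x := esubE (eta2 x) (eta1 x).
have gap_split : eta2 = (fun x => eta1 x + gap x).
  apply/funext => x; rewrite /gap /esubE.
  move: (eta1_0 x) (le12 x); case: (eta1 x) => [a _ _| _ |//].
  - by rewrite addeC subeK.
  - by rewrite eqxx adde0 leye_eq => /eqP.
have gap0 : isE gap.
  move=> x; rewrite /gap /esubE.
  by move: (eta1_0 x) (le12 x); case: (eta1 x) => [a _| |//]; rewrite ?sube_ge0.
rewrite gap_split affine_zero_additive //; apply: leeDl; exact: L_isE.
Qed.

Lemma iter_isE n eta : isE eta -> isE (iter n L eta).
Proof. by move=> eta0; elim: n => //= n; apply: L_isE. Qed.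

Lemma iter_affine_zero_additive n eta1 eta2 : isE eta1 -> isE eta2 ->
  iter n L (fun d => eta1 d + eta2 d) =
  (fun d => iter n L eta1 d + iter n L eta2 d).
Proof.
move=> eta1_0 eta2_0; elim: n => //= n ->.
by rewrite affine_zero_additive //; apply: iter_isE.
Qed.

Lemma iter_affine_zero_monotone n eta1 eta2 d : isE eta1 -> isE eta2 ->
  (forall x, eta1 x <= eta2 x) -> iter n L eta1 d <= iter n L eta2 d.
Proof.
move=> eta1_0 eta2_0 le12; elim: n d => //= n IH d.
by apply: affine_zero_monotone => //; apply: iter_isE.
Qed.

Lemma ranking_inf_iter_eq0 (u r : D -> R) :
  (forall d, (0 <= u d)%R) -> (forall d, (0 <= r d)%R) ->
  (forall d, L (fun x => (r x)%:E) d + (u d)%:E <= (r d)%:E) ->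
  forall d, ereal_inf [set iter n L (fun x => (u x)%:E) d | n in [set: nat]] = 0.
Proof.
move=> u0 r0 ranking d.
set uE := fun x => (u x)%:E; set rE := fun x => (r x)%:E.
have uE0 : isE uE := isE_EFin u0; have rE0 : isE rE := isE_EFin r0.
have step n x : iter n L uE x + iter n.+1 L rE x <= iter n L rE x.
  have urE0 : isE (fun y => uE y + L rE y).
    by move=> y; apply: adde_ge0 => //; apply: L_isE.
  have := congr1 (fun f => f x) (iter_affine_zero_additive n _ _ uE0 (L_isE _ rE0)).
  rewrite iterSr /= => <-.
  by apply: iter_affine_zero_monotone => // y; rewrite addeC; apply: ranking.
set m := ereal_inf _.
have m_lb n : m <= iter n L uE d by apply: ereal_inf_lbound; exists n.
have m0 : 0 <= m by apply/ereal_infP => _ [n _ <-]; apply: iter_isE.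
have m_le_u := m_lb 0%N; move: m0 m_le_u m_lb; case: m => [m'| |] //= m0 _ m_lb.
have telescope n : (n%:R * m')%:E + iter n L rE d <= rE d.
  elim: n => [|n IH]; first by rewrite mul0r add0e.
  rewrite -natr1 mulrDl mul1r EFinD -addeA; apply: le_trans IH.
  by apply: leeD => //; apply: le_trans (step n d); apply: leeD.
congr (_%:E); apply: (@natmul_le_eq0 _ _ (r d)); first by rewrite -lee_fin.
move=> n; rewrite -lee_fin; apply: le_trans (telescope n).
by apply: leeDl; apply: iter_isE.
Qed.

End AffineVanishingAtZero.

Section Derivative.
Variables (R : realType) (D : Type) (K : (D -> \bar R) -> (D -> \bar R)).
Hypothesis K_isE : forall eta, isE eta -> isE (K eta).
Hypothesis K_affine : affineE K.
Implicit Types eta : D -> \bar R.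

Let K0_isE : isE (K (@zeroE R D)) := K_isE _ (isE_zeroE R D).

Lemma K0_le_affine eta d : isE eta -> K (@zeroE R D) d <= K eta d.
Proof.
move=> eta0; apply/lee_mul01Pr; first exact: K0_isE d.
move=> t /andP[t0 t1].
have a0 : (0 < 1 - t)%R by lra.
have a01 : (0 <= 1 - t <= 1)%R by apply/andP; split; lra.
have eta_scaled : isE (fun x => (1 - t)^-1%:E * eta x).
  by move=> x; apply: mule_ge0 => //; rewrite lee_fin invr_ge0 ltW.
have := congr1 (fun f => f d) (@K_affine _ _ _ eta_scaled (isE_zeroE R D) a01).
have -> : (1 - (1 - t) = t)%R by ring.
have -> : (fun x => (1 - t)%:E * ((1 - t)^-1%:E * eta x) + t%:E * @zeroE R D x) = eta.
  by apply/funext => x; rewrite /zeroE mule0 adde0 muleA -EFinM mulfV ?mul1e ?gt_eqF.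
move=> /= ->; apply: lee_paddl => //.
by apply: mule_ge0; [rewrite lee_fin ltW | apply: K_isE].
Qed.

Let DK_fin {eta d c} : K (@zeroE R D) d = c%:E -> DK K eta d = K eta d - c%:E.
Proof. by rewrite /DK /esubE => ->. Qed.

Let DK_pinfty {eta d} : K (@zeroE R D) d = +oo -> DK K eta d = 0.
Proof. by rewrite /DK /esubE => ->; rewrite eqxx. Qed.

Lemma DK_isE eta : isE eta -> isE (DK K eta).
Proof.
move=> eta0 d; move: (K0_le_affine _ d eta0) (K0_isE d).
case E0 : (K (@zeroE R D) d) => [c| |] //= le0 _; last by rewrite DK_pinfty.
by rewrite (DK_fin E0) sube_ge0.
Qed.

Lemma DK_zeroE : DK K (@zeroE R D) = @zeroE R D.
Proof.
apply/funext => d; move: (K0_isE d).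
case E0 : (K (@zeroE R D) d) => [c| |] //= _; last by rewrite DK_pinfty.
by rewrite (DK_fin E0) E0 subee.
Qed.

Lemma DK_affine : affineE (DK K).
Proof.
move=> eta1 eta2 a eta1_0 eta2_0 a01; apply/funext => d /=.
have [a0 a'0] : (0 <= a)%R /\ (0 <= 1 - a)%R by case/andP: a01; split; lra.
move: (K0_isE d).
case E0 : (K (@zeroE R D) d) => [c| |] //= c0; last by rewrite !DK_pinfty // !mule0 adde0.
have K_split eta : K eta d = DK K eta d + c%:E by rewrite (DK_fin E0) subeK.
have := DK_isE _ eta1_0 d; have := DK_isE _ eta2_0 d.
rewrite [LHS](DK_fin E0) K_affine //= (K_split eta1) (K_split eta2) => DK2_0 DK1_0.
rewrite !ge0_muleDr // addeACA -!EFinM -EFinD -mulrDl subrKC mul1r addeK //.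
Qed.

End Derivative.

Theorem theorem3p6 (R : realType) (D : Type)
  (K : (D -> \bar R) -> (D -> \bar R)) (u : D -> R) :
  (forall eta, isE eta -> isE (K eta)) ->
  affineE K ->
  (forall d, (0 <= u d)%R) ->
  (exists r : D -> R, ranking_supermartingale K u r) ->
  (forall d, ereal_inf [set (iter n (DK K) (fun x => (u x)%:E)) d | n in [set: nat]] = 0).
Proof.
move=> K_isE K_affine u0 [r [r0 ranking]].
apply: (@ranking_inf_iter_eq0 R D (DK K) _ _ _ u r u0 r0 ranking).
- exact: DK_isE.
- exact: DK_affine.
- exact: DK_zeroE.
Qed.
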